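(* Let $D^2=\{z\in\mathbb{C}: |z|\le 1\}$ be the closed unit disk with the Euclidean topology, and take starting points $l=0$ (lion) and $m=1$ (man). Then the man has a strategy in $D^2$. Moreover, there is such a strategy $S:P_0(D^2)\to P_1(D^2)$ for which the man stays on the boundary of the disk during the whole pursuit, i.e. $|S(\beta)(t)|=1$ for all $\beta\in P_0(D^2)$ and all $t\ge 0$.
   Context: For a topological space $X$ and $x\in X$, let $P_x(X)$ be the set of continuous maps $\gamma:[0,+\infty)\to X$ with $\gamma(0)=x$. For $\gamma\in P_x(X)$ and $t\ge 0$, write $\gamma_{<t}=\gamma|_{[0,t)}$ and $\gamma_{\le t}=\gamma|_{[0,t]}$. Given starting points $m$ (man) and $l$ (lion) in $X$, a strategy for the man is a function $S:P_l(X)\to P_m(X)$ such that (i) for each $\beta\in P_l(X)$ and each $t\ge 0$, $S(\beta)(t)\neq\beta(t)$; and (ii) (no-lookahead rule) whenever $\beta,\beta'\in P_l(X)$ and $t\ge0$ satisfy $\beta_{<t}=\beta'_{<t}$, then $S(\beta)_{\le t}=S(\beta')_{\le t}$. No speed bound is imposed on the paths. The Axiom of Choice is assumed. *)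

From Stdlib Require Import Reals.
From Coquelicot Require Import Coquelicot.
Open Scope R_scope.

Definition disk (z : C) : Prop := Cmod z <= 1.

(* A path g : [0,+oo) -> X starting at x, with X a subset of C carrying the
   subspace (Euclidean) topology.  Paths are represented as functions R -> C;
   only their values on [0,+oo) matter.  Continuity of g : [0,+oo) -> X is
   continuity at every t >= 0 within [0,+oo). *)
Definition is_path_from (X : C -> Prop) (x : C) (g : R -> C) : Prop :=
  g 0 = x /\
  (forall t, 0 <= t -> X (g t)) /\
  (forall t, 0 <= t ->
     filterlim g (within (fun s => 0 <= s) (locally t)) (locally (g t))).

Definition is_strategy (X : C -> Prop) (m l : C)
    (S : (R -> C) -> (R -> C)) : Prop :=
  (forall b, is_path_from X l b -> is_path_from X m (S b)) /\
  (forall b, is_path_from X l b -> forall t, 0 <= t -> S b t <> b t) /\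
  (forall b b' t, is_path_from X l b -> is_path_from X l b' -> 0 <= t ->
     (forall s, 0 <= s < t -> b s = b' s) ->
     forall s, 0 <= s <= t -> S b s = S b' s).

From Stdlib Require Import Reals Lra Lia Psatz ClassicalEpsilon.
From Coquelicot Require Import Coquelicot.
Open Scope R_scope.

(* The man stays on the unit circle and reacts to the lion's distance |b| to
   the centre with hysteresis.  While |b| < 1/2 he rests at some point of the
   circle.  From the moment |b| reaches 1/2 until it falls back to 1/3 he sits
   at the point opposite to the lion's direction, turned by an angle that
   shrinks linearly to 0 as |b| grows from 1/2 to 1: at |b| = 1/2 this is his
   resting point, at |b| = 1 it is the antipode of the lion, and for |b| < 1 he
   is on a different circle, so he is never caught.  Continuity of the lion's
   path keeps the switching times from accumulating, and since each switch
   happens at a first hitting time, the strategy never looks ahead. *)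

(** * The dodging map *)

Definition cis (a : R) : C := (cos a, sin a).

Lemma Cmod_cis a : Cmod (cis a) = 1.
Proof.
  unfold Cmod, cis; simpl fst; simpl snd.
  rewrite <- sqrt_1; f_equal. rewrite <- (sin2_cos2 a). unfold Rsqr. ring.
Qed.

Definition angle (w : C) : R :=
  if Rle_dec 0 (Im w) then acos (Re w) else - acos (Re w).

Lemma cis_angle w : Cmod w = 1 -> cis (angle w) = w.
Proof.
  intros Hw. assert (E := Cmod2_alt w). rewrite Hw in E.
  destruct w as [x y]; unfold Re, Im in *; simpl in E.
  assert (Hx : -1 <= x <= 1) by nra.
  assert (Hs : sqrt (1 - x²) = Rabs y).
  { rewrite <- sqrt_Rsqr_abs. f_equal. unfold Rsqr. nra. }
  unfold angle, cis, Re, Im; simpl. destruct (Rle_dec 0 y).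
  - rewrite cos_acos, sin_acos, Hs, Rabs_right by lra. reflexivity.
  - rewrite cos_neg, sin_neg, cos_acos, sin_acos, Hs, Rabs_left by lra.
    f_equal. ring.
Qed.

Definition unit_dir (z : C) : C := (RtoC (/ Cmod z) * z)%C.

Lemma Cmod_unit_dir (z : C) : z <> RtoC 0 -> Cmod (unit_dir z) = 1.
Proof.
  intros Hz. assert (Hm := proj1 (Cmod_gt_0 z) Hz).
  unfold unit_dir. rewrite Cmod_mult, Cmod_R, Rabs_pos_eq.
  - field. lra.
  - apply Rlt_le, Rinv_0_lt_compat, Hm.
Qed.

Definition dodge (r : R) (z : C) : C :=
  (- (cis (r * (2 - 2 * Cmod z)) * unit_dir z))%C.

Lemma Cmod_dodge r (z : C) : z <> RtoC 0 -> Cmod (dodge r z) = 1.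
Proof. intros Hz. unfold dodge. rewrite Cmod_opp, Cmod_mult, Cmod_cis, Cmod_unit_dir by exact Hz. ring. Qed.

Lemma dodge_unit_circle r (z : C) : Cmod z = 1 -> dodge r z = (- z)%C.
Proof.
  intros Hz. unfold dodge, unit_dir. rewrite Hz.
  replace (r * (2 - 2 * 1)) with 0 by ring.
  replace (cis 0) with (RtoC 1) by (unfold cis; rewrite cos_0, sin_0; reflexivity).
  rewrite Rinv_1. ring.
Qed.

Definition dodge_angle (P z : C) : R := angle (- P / unit_dir z).

Lemma dodge_half_circle (P z : C) : Cmod P = 1 -> Cmod z = 1 / 2 ->
  dodge (dodge_angle P z) z = P.
Proof.
  intros HP Hz.
  assert (Hz0 : z <> RtoC 0) by (intros E; rewrite E, Cmod_0 in Hz; lra).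
  assert (Hu : unit_dir z <> RtoC 0).
  { intros E. assert (H1 := Cmod_unit_dir z Hz0). rewrite E, Cmod_0 in H1. lra. }
  unfold dodge. rewrite Hz. replace (dodge_angle P z * (2 - 2 * (1 / 2))) with (dodge_angle P z) by field.
  unfold dodge_angle. rewrite cis_angle.
  - field. exact Hu.
  - rewrite Cmod_div, Cmod_opp, HP, Cmod_unit_dir by assumption. field.
Qed.

Lemma dodge_neq r (z : C) : z <> RtoC 0 -> Cmod z <= 1 -> dodge r z <> z.
Proof.
  intros Hz Hz1 E. destruct Hz1 as [Hlt | Heq].
  - rewrite <- E, Cmod_dodge in Hlt by exact Hz. lra.
  - rewrite dodge_unit_circle in E by exact Heq. apply Hz.
    destruct z as [x y]. injection E as Ex Ey. unfold RtoC. f_equal; lra.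
Qed.

Lemma continuous_Cmod (z : C) : continuous Cmod z.
Proof.
  apply (continuous_ext (@norm _ C_R_NormedModule)).
  - intros w. symmetry. apply Cmod_norm.
  - apply filterlim_norm.
Qed.

Lemma continuous_cis a : continuous cis a.
Proof.
  apply (continuous_comp_2 (U := R_UniformSpace) (W := R_UniformSpace) (X := C_UniformSpace)
           cos sin (fun x y => (x, y))).
  - apply continuous_cos.
  - apply continuous_sin.
  - apply (continuous_ext (fun p : R * R => p)). { intros [x y]. reflexivity. }
    apply continuous_id.
Qed.

Lemma continuous_unit_dir (z : C) : z <> RtoC 0 -> continuous unit_dir z.
Proof.
  intros Hz. assert (Hm := proj1 (Cmod_gt_0 z) Hz).
  apply (continuous_ext (fun w : C => scal (/ Cmod w) w)). { intros w. apply scal_R_Cmult. }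
  apply (continuous_scal (K := R_AbsRing) (V := C_R_NormedModule)).
  - apply (continuous_comp Cmod Rinv). apply continuous_Cmod. apply continuous_Rinv. lra.
  - apply continuous_id.
Qed.

(* Coquelicot gives [C] two uniform structures, the product one and that of
   the absolute value; [locally_C] says that they have the same neighbourhoods. *)
Lemma continuous_C_abs {U : UniformSpace} (f : U -> C) x :
  @continuous U C_UniformSpace f x <-> @continuous U (AbsRing_UniformSpace C_AbsRing) f x.
Proof. split; intros H P HP; apply H; apply locally_C; exact HP. Qed.

Lemma continuous_dodge r (z : C) : z <> RtoC 0 -> continuous (dodge r) z.
Proof.
  intros Hz.
  assert (Hrot : continuous (fun w : C => cis (r * (2 - 2 * Cmod w))) z).
  { apply (continuous_comp (fun w => r * (2 - 2 * Cmod w)) cis); [| apply continuous_cis].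
    apply (continuous_mult (K := R_AbsRing)); [apply continuous_const |].
    apply (continuous_minus (K := R_AbsRing) (V := R_NormedModule)); [apply continuous_const |].
    apply (continuous_mult (K := R_AbsRing)); [apply continuous_const | apply continuous_Cmod]. }
  assert (Hprod : continuous (fun w : C => (cis (r * (2 - 2 * Cmod w)) * unit_dir w)%C) z).
  { apply continuous_C_abs, (continuous_mult (K := C_AbsRing)); apply continuous_C_abs.
    - exact Hrot.
    - apply continuous_unit_dir, Hz. }
  exact (continuous_opp (K := C_AbsRing) (V := C_NormedModule) _ z Hprod).
Qed.

(** * First hitting times and continuity on [0, +oo) *)

Local Notation near_nonneg t := (within (fun s : R => 0 <= s) (locally t)).

Definition first_hit (Q : R -> Prop) (a : Rbar) : Rbar :=
  match a with Finite a => Glb_Rbar (fun s => a <= s /\ Q s) | _ => p_infty end.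

Lemma first_hit_ge Q a : Rbar_le a (first_hit Q a).
Proof.
  destruct a as [a| |]; simpl; auto.
  apply (proj2 (Glb_Rbar_correct (fun s => a <= s /\ Q s)) (Finite a)).
  intros x [Hx _]. exact Hx.
Qed.

Lemma first_hit_before Q a s : a <= s -> Rbar_lt s (first_hit Q a) -> ~ Q s.
Proof.
  intros Has Hs HQ. apply (Rbar_lt_not_le _ _ Hs).
  exact (proj1 (Glb_Rbar_correct _) s (conj Has HQ)).
Qed.

Lemma first_hit_eq Q a h : a <= h -> Q h -> (forall s, a <= s < h -> ~ Q s) ->
  first_hit Q a = Finite h.
Proof.
  intros Hah HQ Hbefore. apply is_glb_Rbar_unique. split.
  - intros x [Hx HQx]. simpl. destruct (Rle_dec h x) as [|Hlt]; auto.
    exfalso. apply (Hbefore x); auto. lra.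
  - intros l Hl. apply Hl. auto.
Qed.

Lemma first_hit_approx Q a h : first_hit Q (Finite a) = Finite h ->
  forall eps, 0 < eps -> exists s, h <= s < h + eps /\ a <= s /\ Q s.
Proof.
  intros Hh eps Heps. simpl in Hh.
  destruct (Glb_Rbar_correct (fun s => a <= s /\ Q s)) as [Hlb Hglb]. rewrite Hh in Hlb, Hglb.
  apply NNPP. intros Hno.
  enough (Rbar_le (Finite (h + eps)) (Finite h)) by (simpl in *; lra).
  apply Hglb. intros x [Hx HQ]. simpl. apply Rnot_lt_le. intros Hlt.
  apply Hno. exists x. split; [split |]; auto. exact (Hlb x (conj Hx HQ)).
Qed.

Definition closed_nonneg (Q : R -> Prop) : Prop :=
  forall h, 0 <= h ->
    (forall eps, 0 < eps -> exists s, 0 <= s /\ Rabs (s - h) < eps /\ Q s) -> Q h.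

Lemma first_hit_reached Q a h : closed_nonneg Q -> 0 <= a ->
  first_hit Q a = Finite h -> Q h.
Proof.
  intros HQ Ha Hh.
  assert (Hah : Rbar_le a h) by (rewrite <- Hh; apply first_hit_ge). simpl in Hah.
  apply HQ; [lra |]. intros eps Heps.
  destruct (first_hit_approx Q a h Hh eps Heps) as [s [Hs [Has HQs]]].
  exists s. split; [lra | split; [rewrite Rabs_right; lra | exact HQs]].
Qed.

Lemma first_hit_gt Q a : closed_nonneg Q -> 0 <= a -> ~ Q a ->
  Rbar_lt a (first_hit Q a).
Proof.
  intros HQ Ha HnQ. assert (Hge := first_hit_ge Q a).
  destruct (first_hit Q a) as [h| |] eqn:Eh; simpl in *; auto.
  destruct Hge as [Hlt | <-]; auto.
  exfalso. exact (HnQ (first_hit_reached Q a a HQ Ha Eh)).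
Qed.

Lemma first_hit_agree Q Q' (a t : R) : closed_nonneg Q -> 0 <= a ->
  (forall s, a <= s <= t -> Q s <-> Q' s) -> Rbar_le (first_hit Q a) t ->
  first_hit Q' a = first_hit Q a.
Proof.
  intros HQ Ha Hsame Hle. assert (Hge := first_hit_ge Q a).
  destruct (first_hit Q a) as [h | |] eqn:Eh; simpl in Hge, Hle; try contradiction.
  apply first_hit_eq; [exact Hge | apply Hsame; [lra | exact (first_hit_reached Q a h HQ Ha Eh)] |].
  intros s Hs HQ's. apply (first_hit_before Q a s); [lra | rewrite Eh; simpl; lra |].
  apply Hsame; [lra | exact HQ's].
Qed.

Lemma closed_nonneg_left_limit Q a h : closed_nonneg Q -> 0 <= a < h ->
  (forall s, a <= s < h -> Q s) -> Q h.
Proof.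
  intros HQ Hah Hleft. apply HQ; [lra |]. intros eps Heps.
  set (s := Rmax a (h - eps / 2)).
  assert (a <= s) by apply Rmax_l.
  assert (h - eps / 2 <= s) by apply Rmax_r.
  assert (s < h) by (apply Rmax_lub_lt; lra).
  exists s. split; [lra | split; [rewrite Rabs_left; lra | apply Hleft; lra]].
Qed.

Section ContinuousNonneg.

Variable f : R -> R.
Hypothesis f_cont : forall t, 0 <= t -> filterlim f (near_nonneg t) (locally (f t)).

Lemma continuous_nonneg_eps t : 0 <= t -> forall eps, 0 < eps -> exists d, 0 < d /\
  forall s, 0 <= s -> Rabs (s - t) < d -> Rabs (f s - f t) < eps.
Proof.
  intros Ht eps Heps.
  destruct (proj1 (filterlim_locally f (f t)) (f_cont t Ht) (mkposreal eps Heps)) as [d Hd].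
  exists d. split; [apply cond_pos |]. intros s Hs Hst. exact (Hd s Hst Hs).
Qed.

Lemma closed_nonneg_le r : closed_nonneg (fun s => f s <= r).
Proof.
  intros h Hh Happrox. apply Rnot_lt_le. intros Hlt.
  destruct (continuous_nonneg_eps h Hh (f h - r)) as [d [Hd Hnear]]; [lra |].
  destruct (Happrox d Hd) as [s [Hs [Hsh Hfs]]].
  specialize (Hnear s Hs Hsh). apply Rabs_def2 in Hnear. lra.
Qed.

Lemma closed_nonneg_ge r : closed_nonneg (fun s => r <= f s).
Proof.
  intros h Hh Happrox. apply Rnot_lt_le. intros Hlt.
  destruct (continuous_nonneg_eps h Hh (r - f h)) as [d [Hd Hnear]]; [lra |].
  destruct (Happrox d Hd) as [s [Hs [Hsh Hfs]]].
  specialize (Hnear s Hs Hsh). apply Rabs_def2 in Hnear. lra.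
Qed.

End ContinuousNonneg.

Lemma filterlim_nonneg_piecewise (M f g : R -> C) t :
  filterlim f (near_nonneg t) (locally (M t)) -> filterlim g (near_nonneg t) (locally (M t)) ->
  near_nonneg t (fun s => M s = f s \/ M s = g s) -> filterlim M (near_nonneg t) (locally (M t)).
Proof.
  intros Hf Hg Hpieces P HP.
  assert (FF : Filter (near_nonneg t)) by (apply within_filter, locally_filter).
  change (near_nonneg t (fun s => P (M s))).
  apply (filter_imp (fun s => (P (f s) /\ P (g s)) /\ (M s = f s \/ M s = g s))).
  - intros s [[Hfs Hgs] [-> | ->]]; assumption.
  - apply filter_and; [apply filter_and; [apply Hf | apply Hg]; exact HP | exact Hpieces].
Qed.

Lemma left_limit_unique (f g : R -> C) t : 0 < t ->
  filterlim f (near_nonneg t) (locally (f t)) -> filterlim g (near_nonneg t) (locally (g t)) ->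
  (forall s, 0 <= s < t -> f s = g s) -> f t = g t.
Proof.
  intros Ht Hf Hg Hagree.
  assert (Hpos : locally t (fun s : R => Rbar_lt 0 s)) by (apply open_Rbar_gt; exact Ht).
  assert (Hle : filter_le (at_left t) (near_nonneg t)).
  { intros P HP. apply (filter_imp (F := locally t) (fun s : R => Rbar_lt 0 s /\ (0 <= s -> P s)));
      [| apply filter_and; assumption].
    intros s [Hs HPs] _. apply HPs. simpl in Hs. lra. }
  assert (Hfg : filterlim f (at_left t) (locally (g t))).
  { apply (filterlim_ext_loc g); [| exact (filterlim_filter_le_1 _ Hle Hg)].
    apply (filter_imp (F := locally t) (fun s : R => Rbar_lt 0 s)); [| exact Hpos].
    intros s Hs Hst. symmetry. apply Hagree. simpl in Hs. lra. }
  exact (@filterlim_locally_unique R C_AbsRing C_NormedModule (at_left t)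
           (Proper_StrongProper _ (at_left_proper_filter t)) f (f t) (g t)
           (filterlim_filter_le_1 _ Hle Hf) Hfg).
Qed.

(** * The man's strategy *)

Definition start_level (j : nat) : R :=
  match j with O => 0 | S _ => if Nat.even j then 1 / 3 else 1 / 2 end.

Lemma start_levels_alternate i :
  (start_level (S i) = 1 / 2 /\ start_level (S (S i)) = 1 / 3) \/
  (start_level (S i) = 1 / 3 /\ start_level (S (S i)) = 1 / 2).
Proof.
  unfold start_level. rewrite (Nat.even_succ (S i)), Nat.odd_succ, Nat.even_succ, <- Nat.negb_even.
  destruct (Nat.even i); simpl; [left | right]; split; reflexivity.
Qed.

Section Lion.

Variable b : R -> C.

Definition phase_exit (j : nat) (s : R) : Prop :=
  if Nat.even j then 1 / 2 <= Cmod (b s) else Cmod (b s) <= 1 / 3.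

(* Phase [j] starts at time [fst (phase_data j)], or never if this is
   [p_infty], with the man at [snd (phase_data j)]; he rests during even phases
   and dodges during odd ones. *)
Fixpoint phase_data (j : nat) : Rbar * C :=
  match j with
  | O => (Finite 0, RtoC 1)
  | S i =>
      let a := fst (phase_data i) in
      let P := snd (phase_data i) in
      let a' := first_hit (phase_exit i) a in
      (a', if Nat.even i then P else dodge (dodge_angle P (b a)) (b a'))
  end.

Definition phase_start (j : nat) : Rbar := fst (phase_data j).
Definition phase_anchor (j : nat) : C := snd (phase_data j).

Definition phase_pos (j : nat) (s : R) : C :=
  if Nat.even j then phase_anchor j
  else dodge (dodge_angle (phase_anchor j) (b (phase_start j))) (b s).

Definition in_phase (j : nat) (t : R) : Prop :=
  Rbar_le (phase_start j) t /\ Rbar_lt t (phase_start (S j)).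

(* For [t >= 0], [epsilon] picks the unique phase containing [t]
   ([phases_cover], [in_phase_unique]). *)
Definition man (t : R) : C :=
  phase_pos (epsilon (inhabits 0%nat) (fun j => in_phase j t)) t.

Lemma phase_start_S j : phase_start (S j) = first_hit (phase_exit j) (phase_start j).
Proof. reflexivity. Qed.

Lemma phase_anchor_S j : phase_anchor (S j) = phase_pos j (phase_start (S j)).
Proof. unfold phase_pos, phase_anchor; simpl. destruct (Nat.even j); reflexivity. Qed.

Lemma phase_start_mono i j : (i <= j)%nat -> Rbar_le (phase_start i) (phase_start j).
Proof.
  induction 1 as [| j _ IH]; [apply Rbar_le_refl |].
  eapply Rbar_le_trans; [exact IH |]. rewrite phase_start_S. apply first_hit_ge.
Qed.

Lemma in_phase_unique i j t : in_phase i t -> in_phase j t -> i = j.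
Proof.
  intros [Hi Hi'] [Hj Hj'].
  destruct (Nat.lt_trichotomy i j) as [Hij | [Hij | Hij]]; auto; exfalso.
  - apply (Rbar_lt_not_le _ _ Hi'). eapply Rbar_le_trans; [apply phase_start_mono, Hij | exact Hj].
  - apply (Rbar_lt_not_le _ _ Hj'). eapply Rbar_le_trans; [apply phase_start_mono, Hij | exact Hi].
Qed.

Lemma man_eq j t : in_phase j t -> man t = phase_pos j t.
Proof.
  intros Hj. unfold man. f_equal.
  apply (in_phase_unique _ _ t); [apply epsilon_spec; exists j |]; exact Hj.
Qed.

Hypothesis Hb : is_path_from disk (RtoC 0) b.

Lemma lion_continuous t : 0 <= t -> filterlim b (near_nonneg t) (locally (b t)).
Proof. apply Hb. Qed.

Lemma abs_lion_continuous t : 0 <= t ->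
  filterlim (fun s => Cmod (b s)) (near_nonneg t) (locally (Cmod (b t))).
Proof.
  intros Ht. eapply filterlim_comp; [apply lion_continuous, Ht | apply continuous_Cmod].
Qed.

Lemma closed_phase_exit j : closed_nonneg (phase_exit j).
Proof.
  unfold phase_exit. destruct (Nat.even j).
  - apply closed_nonneg_ge, abs_lion_continuous.
  - apply closed_nonneg_le, abs_lion_continuous.
Qed.

Lemma not_phase_exit_at_start j a : Cmod (b a) = start_level j -> ~ phase_exit j a.
Proof.
  unfold phase_exit, start_level. intros E.
  destruct j as [| j]; [simpl; lra |]. destruct (Nat.even (S j)); lra.
Qed.

Lemma exit_level j a h : 0 <= a < h -> phase_exit j h ->
  (forall s, a <= s < h -> ~ phase_exit j s) -> Cmod (b h) = start_level (S j).
Proof.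
  intros Hah Hexit Hbefore. unfold phase_exit, start_level in *.
  rewrite Nat.even_succ, <- Nat.negb_even. destruct (Nat.even j); simpl.
  - apply Rle_antisym; [| exact Hexit].
    apply (closed_nonneg_left_limit (fun s => Cmod (b s) <= 1 / 2) a); [apply closed_nonneg_le, abs_lion_continuous | exact Hah |].
    intros s Hs. specialize (Hbefore s Hs). lra.
  - apply Rle_antisym; [exact Hexit |].
    apply (closed_nonneg_left_limit (fun s => 1 / 3 <= Cmod (b s)) a);
      [apply closed_nonneg_ge, abs_lion_continuous | exact Hah |].
    intros s Hs. specialize (Hbefore s Hs). lra.
Qed.

Definition phase_invariant (j : nat) : Prop :=
  match phase_start j with
  | Finite a => 0 <= a /\ Cmod (phase_anchor j) = 1 /\ Cmod (b a) = start_level j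
  | p_infty => True
  | m_infty => False
  end.

Lemma phase_invariant_holds j : phase_invariant j.
Proof.
  induction j as [| j IH].
  - unfold phase_invariant; simpl.
    rewrite (proj1 Hb), Cmod_0. split; [lra | split; [apply Cmod_1 | reflexivity]].
  - unfold phase_invariant in *. rewrite phase_start_S.
    destruct (phase_start j) as [a | |] eqn:Ea; [| exact I | contradiction].
    destruct IH as [Ha [HP Hlevel]].
    assert (Hgt := first_hit_gt _ a (closed_phase_exit j) Ha (not_phase_exit_at_start j a Hlevel)).
    destruct (first_hit (phase_exit j) a) as [h | |] eqn:Eh; simpl in Hgt; [| exact I | contradiction].
    assert (Hexit := first_hit_reached _ a h (closed_phase_exit j) Ha Eh).
    assert (Hlevel' : Cmod (b h) = start_level (S j)).
    { apply (exit_level j a h); [lra | exact Hexit |].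
      intros s Hs. apply (first_hit_before _ a); [lra | rewrite Eh; simpl; lra]. }
    split; [lra | split; [| exact Hlevel']].
    rewrite phase_anchor_S, phase_start_S, Ea, Eh. unfold phase_pos.
    destruct (Nat.even j); [exact HP |].
    apply Cmod_dodge, Cmod_gt_0. simpl. rewrite Hlevel'.
    destruct (start_levels_alternate j) as [[H1 _] | [H1 _]]; lra.
Qed.

Lemma phase_start_finite j (t : R) : Rbar_le (phase_start j) t ->
  exists a, phase_start j = Finite a /\ 0 <= a <= t /\
    Cmod (phase_anchor j) = 1 /\ Cmod (b a) = start_level j.
Proof.
  intros Hle. assert (Hinv := phase_invariant_holds j). unfold phase_invariant in Hinv.
  destruct (phase_start j) as [a | |]; simpl in Hle; try contradiction.
  destruct Hinv as (Ha & HP & Hlevel). exists a. repeat split; assumption.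
Qed.

Lemma phase_start_lt_S j (a : R) : phase_start j = Finite a -> Rbar_lt a (phase_start (S j)).
Proof.
  intros Ea. assert (Hinv := phase_invariant_holds j).
  unfold phase_invariant in Hinv. rewrite Ea in Hinv. destruct Hinv as [Ha [_ Hlevel]].
  rewrite phase_start_S, Ea. apply first_hit_gt; [apply closed_phase_exit | exact Ha |].
  apply not_phase_exit_at_start, Hlevel.
Qed.

Lemma abs_lion_in_phase j s : in_phase j s -> 0 <= s /\
  (Nat.even j = true -> Cmod (b s) < 1 / 2) /\ (Nat.even j = false -> 1 / 3 < Cmod (b s)).
Proof.
  intros [Hstart Hend]. destruct (phase_start_finite j s Hstart) as [a [Ea [Has _]]].
  rewrite phase_start_S, Ea in Hend.
  assert (Hnot := first_hit_before _ a s (proj2 Has) Hend). unfold phase_exit in Hnot.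
  split; [lra |]. split; intros E; rewrite E in Hnot; lra.
Qed.

(* Otherwise the start times would increase to some [L], and near [L] the
   continuous function |b| would take both values 1/2 and 1/3. *)
Lemma phases_cover t : 0 <= t -> exists j, in_phase j t.
Proof.
  intros Ht. apply NNPP. intros Hno.
  assert (Hle : forall j, Rbar_le (phase_start j) t).
  { induction j as [| j IH]; [simpl; exact Ht |].
    apply Rbar_not_lt_le. intros Hlt. apply Hno. exists j. split; assumption. }
  set (u j := real (phase_start j)).
  assert (Hu : forall j, phase_start j = Finite (u j) /\ 0 <= u j <= t /\
                          Cmod (b (u j)) = start_level j).
  { intros j. destruct (phase_start_finite j t (Hle j)) as [a [Ea [Ha [_ Hlevel]]]].
    unfold u. rewrite Ea. auto. }
  assert (Hgrow : Un_growing u).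
  { intros n. assert (M := phase_start_mono n (S n) (Nat.le_succ_diag_r n)).
    rewrite (proj1 (Hu n)), (proj1 (Hu (S n))) in M. exact M. }
  destruct (growing_cv u Hgrow) as [L HL]; [exists t; intros x [j ->]; apply Hu |].
  assert (HL0 : 0 <= L) by (apply Rle_trans with (u 0%nat); [apply Hu | apply growing_ineq; auto]).
  destruct (continuous_nonneg_eps _ abs_lion_continuous L HL0 (1 / 24)) as [d [Hd Hnear]]; [lra |].
  destruct (HL d Hd) as [N HN].
  assert (H1 := Hnear (u (S N)) (proj1 (proj1 (proj2 (Hu _)))) (HN (S N) ltac:(lia))).
  assert (H2 := Hnear (u (S (S N))) (proj1 (proj1 (proj2 (Hu _)))) (HN (S (S N)) ltac:(lia))).
  rewrite (proj2 (proj2 (Hu _))) in H1. rewrite (proj2 (proj2 (Hu _))) in H2.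
  apply Rabs_def2 in H1. apply Rabs_def2 in H2.
  destruct (start_levels_alternate N) as [[E1 E2] | [E1 E2]]; lra.
Qed.

Lemma phase_pos_continuous j s : 0 <= s -> (Nat.even j = false -> b s <> RtoC 0) ->
  filterlim (phase_pos j) (near_nonneg s) (locally (phase_pos j s)).
Proof.
  intros Hs Hnz. unfold phase_pos. destruct (Nat.even j).
  - apply filterlim_const.
  - eapply filterlim_comp; [apply lion_continuous, Hs | apply continuous_dodge, Hnz; reflexivity].
Qed.

Lemma phase_pos_at_start j (a : R) : phase_start j = Finite a -> phase_pos j a = phase_anchor j.
Proof.
  intros Ea. unfold phase_pos. destruct (Nat.even j) eqn:Ej; [reflexivity |].
  destruct (phase_start_finite j a) as [a' [Ea' [_ [HP Hlevel]]]]; [rewrite Ea; simpl; lra |].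
  rewrite Ea in Ea'. injection Ea' as <-. rewrite Ea. simpl.
  apply dodge_half_circle; [exact HP |]. rewrite Hlevel.
  destruct j as [| j]; [discriminate | unfold start_level; rewrite Ej; reflexivity].
Qed.

Lemma in_phase_cases j t : in_phase j t ->
  (j = 0%nat \/ Rbar_lt (phase_start j) t) \/ (exists i, j = S i /\ phase_start j = Finite t).
Proof.
  intros [Hstart _]. destruct (phase_start_finite j t Hstart) as [a [Ea [[_ Hat] _]]].
  rewrite Ea. destruct Hat as [Hlt | ->]; [left; right; exact Hlt |].
  destruct j as [| i]; [left; left; reflexivity | right; exists i; split; reflexivity || exact Ea].
Qed.

Lemma man_continuous_in_phase j t : in_phase j t -> (j = 0%nat \/ Rbar_lt (phase_start j) t) ->
  filterlim man (near_nonneg t) (locally (man t)).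
Proof.
  intros Hj Hinside.
  assert (Ht := proj1 (abs_lion_in_phase j t Hj)).
  assert (Hend := open_Rbar_lt _ t (proj2 Hj)).
  assert (Hpos := phase_pos_continuous j t Ht). rewrite <- (man_eq j t Hj) in Hpos.
  apply (filterlim_nonneg_piecewise man (phase_pos j) (phase_pos j)).
  1-2: apply Hpos; intros Ej; apply Cmod_gt_0;
       destruct (abs_lion_in_phase j t Hj) as [_ [_ Hodd]]; specialize (Hodd Ej); lra.
  destruct Hinside as [-> | Hlt].
  - apply (filter_imp (F := locally t) (fun s : R => Rbar_lt s (phase_start 1))); [| exact Hend].
    intros s Hs Hs0. left. apply man_eq. split; [simpl; exact Hs0 | exact Hs].
  - assert (Hstart := open_Rbar_gt _ t Hlt).
    apply (filter_imp (F := locally t)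
             (fun s : R => Rbar_lt (phase_start j) s /\ Rbar_lt s (phase_start (S j))));
      [| apply filter_and; assumption].
    intros s [Hs1 Hs2] _. left. apply man_eq. split; [apply Rbar_lt_le, Hs1 | exact Hs2].
Qed.

Lemma man_continuous_at_switch i t : in_phase (S i) t -> phase_start (S i) = Finite t ->
  filterlim man (near_nonneg t) (locally (man t)).
Proof.
  intros Hj Eswitch.
  destruct (phase_start_finite (S i) t) as [t' [Et' [[Ht _] [_ Hlevel]]]]; [rewrite Eswitch; simpl; lra |].
  rewrite Eswitch in Et'. injection Et' as <-.
  assert (Hnz : b t <> RtoC 0).
  { apply Cmod_gt_0. rewrite Hlevel. destruct (start_levels_alternate i) as [[E _] | [E _]]; lra. }
  assert (Hman : man t = phase_anchor (S i)) by (rewrite (man_eq _ t Hj); apply phase_pos_at_start, Eswitch).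
  destruct (phase_start_finite i t) as [a [Ea _]].
  { eapply Rbar_le_trans; [apply phase_start_mono, Nat.le_succ_diag_r | rewrite Eswitch; apply Rbar_le_refl]. }
  assert (Hstart : locally t (fun s : R => Rbar_lt a s)).
  { apply open_Rbar_gt. rewrite <- Eswitch. apply phase_start_lt_S, Ea. }
  assert (Hend := open_Rbar_lt _ t (proj2 Hj)).
  apply (filterlim_nonneg_piecewise man (phase_pos i) (phase_pos (S i))).
  - rewrite Hman, phase_anchor_S, Eswitch. apply phase_pos_continuous; [exact Ht | intros _; exact Hnz].
  - rewrite Hman, <- (phase_pos_at_start (S i) t Eswitch).
    apply phase_pos_continuous; [exact Ht | intros _; exact Hnz].
  - apply (filter_imp (F := locally t) (fun s : R => Rbar_lt a s /\ Rbar_lt s (phase_start (S (S i)))));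
      [| apply filter_and; assumption].
    intros s [Hs1 Hs2] _. destruct (Rlt_le_dec s t) as [Hlt | Hge].
    + left. apply man_eq. split; [rewrite Ea; simpl in Hs1 |- *; lra | rewrite Eswitch; exact Hlt].
    + right. apply man_eq. split; [rewrite Eswitch; exact Hge | exact Hs2].
Qed.

Lemma man_continuous t : 0 <= t -> filterlim man (near_nonneg t) (locally (man t)).
Proof.
  intros Ht. destruct (phases_cover t Ht) as [j Hj].
  destruct (in_phase_cases j t Hj) as [Hinside | [i [-> Eswitch]]].
  - exact (man_continuous_in_phase j t Hj Hinside).
  - exact (man_continuous_at_switch i t Hj Eswitch).
Qed.

Lemma man_on_circle_avoids_lion t : 0 <= t -> Cmod (man t) = 1 /\ man t <> b t.
Proof.
  intros Ht. destruct (phases_cover t Ht) as [j Hj].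
  destruct (abs_lion_in_phase j t Hj) as [_ [Heven Hodd]].
  destruct (phase_start_finite j t (proj1 Hj)) as [a [_ [_ [HP _]]]].
  rewrite (man_eq j t Hj). unfold phase_pos. destruct (Nat.even j).
  - split; [exact HP |]. intros E. specialize (Heven eq_refl). rewrite <- E, HP in Heven. lra.
  - specialize (Hodd eq_refl).
    assert (Hnz : b t <> RtoC 0) by (apply Cmod_gt_0; lra).
    split; [apply Cmod_dodge, Hnz |].
    apply dodge_neq; [exact Hnz | apply (proj1 (proj2 Hb)), Ht].
Qed.

Lemma man_0 : man 0 = RtoC 1.
Proof.
  assert (Hj : in_phase 0 0) by (split; [apply Rbar_le_refl | apply phase_start_lt_S; reflexivity]).
  rewrite (man_eq 0 0 Hj). reflexivity.
Qed.

End Lion.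

(** * No lookahead *)

Lemma phase_pos_agree b b' j s :
  phase_start b j = phase_start b' j -> phase_anchor b j = phase_anchor b' j ->
  b (phase_start b j) = b' (phase_start b j) -> b s = b' s ->
  phase_pos b j s = phase_pos b' j s.
Proof.
  intros Hstart Hanchor Hb0 Hs. unfold phase_pos.
  rewrite <- Hstart, <- Hanchor, <- Hb0, <- Hs. reflexivity.
Qed.

Section Causality.

Variables b b' : R -> C.
Hypothesis Hb : is_path_from disk (RtoC 0) b.
Hypothesis Hb' : is_path_from disk (RtoC 0) b'.
Variable t : R.
Hypothesis Hagree : forall s, 0 <= s <= t -> b s = b' s.

Definition phases_agree (j : nat) : Prop :=
  (phase_start b j = phase_start b' j /\ phase_anchor b j = phase_anchor b' j) \/
  (Rbar_lt t (phase_start b j) /\ Rbar_lt t (phase_start b' j)).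

Lemma phase_exit_agree j a : 0 <= a ->
  forall s, a <= s <= t -> phase_exit b j s <-> phase_exit b' j s.
Proof. intros Ha s Hs. unfold phase_exit. rewrite Hagree by lra. reflexivity. Qed.

Lemma phases_agree_all j : phases_agree j.
Proof.
  induction j as [| j IH]; [left; split; reflexivity |].
  unfold phases_agree in *. rewrite !phase_start_S.
  destruct IH as [[Hstart Hanchor] | [Hlate Hlate']].
  2: { right. split; [apply (Rbar_lt_le_trans _ _ _ Hlate) | apply (Rbar_lt_le_trans _ _ _ Hlate')];
        apply first_hit_ge. }
  rewrite <- Hstart.
  destruct (Rbar_le_dec (first_hit (phase_exit b j) (phase_start b j)) t) as [Hle | Hgt].
  - destruct (phase_start_finite b Hb j t) as [a [Ea [[Ha _] _]]];
      [eapply Rbar_le_trans; [apply first_hit_ge | exact Hle] |].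
    rewrite Ea in Hle |- *.
    assert (Hhit := first_hit_agree _ _ a t (closed_phase_exit b Hb j) Ha (phase_exit_agree j a Ha) Hle).
    left. split; [symmetry; exact Hhit |].
    rewrite !phase_anchor_S, !phase_start_S, <- Hstart, Ea, Hhit.
    assert (Hge := first_hit_ge (phase_exit b j) a).
    destruct (first_hit (phase_exit b j) a) as [h | |]; simpl in Hle, Hge; try contradiction.
    apply phase_pos_agree; [exact Hstart | exact Hanchor | rewrite Ea |]; apply Hagree; simpl; lra.
  - right. split; [apply Rbar_not_le_lt, Hgt |].
    apply Rbar_not_le_lt. intros Hle'. apply Hgt.
    destruct (phase_start_finite b' Hb' j t) as [a [Ea [[Ha _] _]]];
      [rewrite <- Hstart; eapply Rbar_le_trans; [apply first_hit_ge | exact Hle'] |].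
    rewrite <- Hstart in Ea. rewrite Ea in Hle' |- *.
    rewrite (first_hit_agree _ _ a t (closed_phase_exit b' Hb' j) Ha
                  (fun s Hs => iff_sym (phase_exit_agree j a Ha s Hs)) Hle').
    exact Hle'.
Qed.

Lemma man_agree s : 0 <= s <= t -> man b s = man b' s.
Proof.
  intros Hs. destruct (phases_cover b Hb s (proj1 Hs)) as [j [Hstart Hend]].
  destruct (phases_agree_all j) as [[Estart Eanchor] | [Hlate _]].
  2: { exfalso. apply (Rbar_lt_not_le _ _ Hlate). eapply Rbar_le_trans; [exact Hstart | simpl; lra]. }
  assert (Hj' : in_phase b' j s).
  { split; [rewrite <- Estart; exact Hstart |].
    destruct (phases_agree_all (S j)) as [[E _] | [_ Hlate']]; [rewrite <- E; exact Hend |].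
    apply (Rbar_le_lt_trans _ (Finite t)); [simpl; apply (proj2 Hs) | exact Hlate']. }
  rewrite (man_eq b j s (conj Hstart Hend)), (man_eq b' j s Hj').
  destruct (phase_start_finite b Hb j s Hstart) as [a [Ea [Has _]]].
  apply phase_pos_agree; [exact Estart | exact Eanchor | rewrite Ea; apply Hagree; simpl; lra | apply Hagree; exact Hs].
Qed.

End Causality.

Lemma lion_paths_agree_closed b b' t :
  is_path_from disk (RtoC 0) b -> is_path_from disk (RtoC 0) b' -> 0 <= t ->
  (forall s, 0 <= s < t -> b s = b' s) -> forall s, 0 <= s <= t -> b s = b' s.
Proof.
  intros Hb Hb' Ht Hbefore s [Hs Hst].
  destruct (Rle_lt_or_eq_dec s t Hst) as [Hlt | ->]; [apply Hbefore; lra |].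
  destruct (Rle_lt_or_eq_dec 0 t Ht) as [Hpos | <-]; [| rewrite (proj1 Hb), (proj1 Hb'); reflexivity].
  apply left_limit_unique; [exact Hpos | apply Hb; exact Ht | apply Hb'; exact Ht | exact Hbefore].
Qed.

Theorem mainTheorem8 :
  exists S : (R -> C) -> (R -> C),
    is_strategy disk (RtoC 1) (RtoC 0) S /\
    (forall b, is_path_from disk (RtoC 0) b ->
       forall t, 0 <= t -> Cmod (S b t) = 1).
Proof.
  exists man. split; [split; [| split] |].
  - intros b Hb. split; [exact (man_0 b Hb) | split].
    + intros t Ht. unfold disk. rewrite (proj1 (man_on_circle_avoids_lion b Hb t Ht)). lra.
    + intros t Ht. apply man_continuous; assumption.
  - intros b Hb t Ht. apply (man_on_circle_avoids_lion b Hb t Ht).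
  - intros b b' t Hb Hb' Ht Hbefore.
    apply (man_agree b b' Hb Hb' t), (lion_paths_agree_closed b b' t Hb Hb' Ht Hbefore).
  - intros b Hb t Ht. apply (man_on_circle_avoids_lion b Hb t Ht).
Qed.
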